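(* For a topological space $X$ with a locally countable $\pi$-base, the game $\mathsf{BM}_\omega(X)$ is determined, i.e. one of the two players has a winning strategy.
   Context: A family $\mathcal{B}$ of non-empty open sets of $X$ is a $\pi$-base if every non-empty open set of $X$ contains a member of $\mathcal{B}$; it is locally countable if each member of $\mathcal{B}$ contains only countably many members of $\mathcal{B}$. The game $\mathsf{BM}_\omega(X)$: \textsc{Alice} plays a non-empty open set $A_0$; \textsc{Bob} plays a countable collection $\mathcal{B}_0$ of non-empty open subsets of $A_0$; in inning $n+1$, for each $B \in \mathcal{B}_n$ \textsc{Alice} plays a non-empty open set $A_B \subseteq B$, letting $\mathcal{A}_{n+1}=\{A_B : B\in\mathcal{B}_n\}$, and \textsc{Bob} plays a countable collection $\mathcal{B}_{n+1}$ of non-empty open subsets of $\bigcup\mathcal{A}_{n+1}$. \textsc{Bob} wins if $\bigcap_{n}\bigcup\mathcal{B}_n\neq\emptyset$, otherwise \textsc{Alice} wins. *)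

From mathcomp Require Import all_boot all_order.
From mathcomp Require Import all_classical all_reals all_analysis.
Set Implicit Arguments. Unset Strict Implicit. Unset Printing Implicit Defensive.
Local Open Scope classical_set_scope.

Section BMomega.
Variable T : topologicalType.

Definition pi_base (B : set (set T)) : Prop :=
  (forall U, B U -> open U /\ U !=set0) /\
  (forall V, open V -> V !=set0 -> exists2 U, B U & U `<=` V).

Definition locally_countable (B : set (set T)) : Prop :=
  forall U, B U -> countable [set W | B W /\ W `<=` U].

(* Round n (n >= 0): given Bob's previous
   collection C (with the convention that before round 0 it is [set setT]),
   Alice plays a family a : set T -> set T, i.e. a set A_B = a B for each
   B in C (and a B = set0 for B not in C, so moves are canonical).
   Round 0 thus is Alice playing A_0 = a setT. *)
Definition alice_legal (C : set (set T)) (a : set T -> set T) : Prop :=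
  (forall B, C B -> [/\ open (a B), a B !=set0 & a B `<=` B]) /\
  (forall B, ~ C B -> a B = set0).

Definition bob_legal (C : set (set T)) (a : set T -> set T)
    (D : set (set T)) : Prop :=
  countable D /\
  (forall B, D B -> [/\ open B, B !=set0 & B `<=` \bigcup_(E in C) a E]).

Definition prev_coll (c : nat -> set (set T)) (n : nat) : set (set T) :=
  if n is m.+1 then c m else [set setT].

Definition bob_wins_play (c : nat -> set (set T)) : Prop :=
  \bigcap_n (\bigcup_(B in c n) B) !=set0.

(* Perfect-information strategies. Alice sees Bob's previous moves;
   Bob sees Alice's moves so far (including the current one). *)
Definition alice_strategy := seq (set (set T)) -> (set T -> set T).
Definition bob_strategy := seq (set T -> set T) -> set (set T).

Definition alice_winning (sigma : alice_strategy) : Prop :=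
  forall c : nat -> set (set T),
    let a := fun n => sigma (mkseq c n) in
    (forall n, (forall k, (k < n)%N -> bob_legal (prev_coll c k) (a k) (c k)) ->
        alice_legal (prev_coll c n) (a n)) /\
    ((forall n, bob_legal (prev_coll c n) (a n) (c n)) -> ~ bob_wins_play c).

Definition bob_winning (tau : bob_strategy) : Prop :=
  forall a : nat -> (set T -> set T),
    let c := fun n => tau (mkseq a n.+1) in
    (forall n, (forall k, (k <= n)%N -> alice_legal (prev_coll c k) (a k)) ->
        bob_legal (prev_coll c n) (a n) (c n)) /\
    ((forall n, alice_legal (prev_coll c n) (a n)) -> bob_wins_play c).

Definition BM_omega_determined : Prop :=
  (exists sigma, alice_winning sigma) \/ (exists tau, bob_winning tau).

End BMomega.

From mathcomp Require Import all_boot all_order.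
From mathcomp Require Import all_classical all_reals all_analysis.
Set Implicit Arguments.
Unset Strict Implicit.
Local Open Scope classical_set_scope.

(* If some non-empty open set V0 is meager, witnessed by open sets G_n dense
   in V0 whose intersection misses V0, then Alice wins: she opens with V0 and
   in inning n+1 shrinks each of Bob's sets E to E `&` G_n, which is non-empty
   by density.  Otherwise every member of the pi-base B is nonmeager.  Bob then
   answers each of Alice's sets A with all members of B below one fixed member
   of B inside A, countably many by local countability.  If W is the member
   chosen inside Alice's first move, every non-empty open subset of W contains
   one of Bob's sets of every inning, so the unions of his moves are open and
   dense in W, and W meets their intersection. *)

Section Basics.
Variable T : topologicalType.

Definition dense_in (W G : set T) : Prop :=
  forall V, open V -> V !=set0 -> V `<=` W -> V `&` G !=set0.

(* For open [W] this says exactly that [W] is not meager. *)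
Definition nonmeager (W : set T) : Prop :=
  forall G : nat -> set T, (forall n, open (G n)) ->
    (forall n, dense_in W (G n)) -> W `&` \bigcap_n G n !=set0.

Lemma not_nonmeager W : ~ nonmeager W ->
  exists G : nat -> set T, [/\ forall n, open (G n),
    forall n, dense_in W (G n) & W `&` \bigcap_n G n = set0].
Proof.
move=> nW; apply: contrapT => noG; apply: nW => G oG dG.
by apply/set0P/negP => /eqP WG0; apply: noG; exists G.
Qed.

Lemma last_mkseq_prev_coll (c : nat -> set (set T)) n :
  last [set setT] (mkseq c n) = prev_coll c n.
Proof. by case: n => // m; rewrite mkseqS last_rcons. Qed.

End Basics.

Section AliceWins.
Variable T : topologicalType.

Definition alice_reply (C : set (set T)) (H : set T) (E : set T) : set T :=
  [set x | C E /\ (E `&` H) x].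

Lemma alice_reply_sub C H E : alice_reply C H E `<=` H.
Proof. by move=> x [_ []]. Qed.

Lemma alice_reply_legal C H : open H ->
  (forall E, C E -> open E /\ E `&` H !=set0) ->
  alice_legal C (alice_reply C H).
Proof.
move=> oH CEH; split=> E; last first.
  by move=> nCE; apply/seteqP; split=> x // [].
move=> CE; have [oE nEH] := CEH E CE.
have -> : alice_reply C H E = E `&` H by apply/seteqP; split=> x // [].
by split; [exact: openI | exact: nEH | exact: subIsetl].
Qed.

Variables (V0 : set T) (G : nat -> set T).
Hypotheses (oV0 : open V0) (nV0 : V0 !=set0) (oG : forall n, open (G n)).
Hypotheses (dG : forall n, dense_in V0 (G n)).
Hypothesis V0G : V0 `&` \bigcap_n G n = set0.

Definition alice_target n := if n is m.+1 then V0 `&` G m else V0.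

Lemma alice_target_sub n : alice_target n `<=` V0.
Proof. by case: n => // m; exact: subIsetl. Qed.

Lemma open_alice_target n : open (alice_target n).
Proof. by case: n => // m; exact: openI. Qed.

Definition alice_meager_strategy : alice_strategy T :=
  fun s => alice_reply (last [set setT] s) (alice_target (size s)).

Lemma alice_meager_strategy_winning : alice_winning alice_meager_strategy.
Proof.
move=> c /=.
have aE n : alice_meager_strategy (mkseq c n) =
    alice_reply (prev_coll c n) (alice_target n).
  by rewrite /alice_meager_strategy size_mkseq last_mkseq_prev_coll.
split=> [n bob_leg|bob_leg [x cx]].
  rewrite aE; apply: alice_reply_legal; first exact: open_alice_target.
  case: n bob_leg => [_ E ->|m bob_leg E cE].
    by split; [exact: openT | rewrite setTI].
  have [_ /(_ E cE) [oE nE sE]] := bob_leg m (ltnSn m).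
  have EV0 : E `<=` V0.
    by move=> y /sE [F _]; rewrite aE => /alice_reply_sub /alice_target_sub.
  by split=> //; rewrite setIA (setIidl EV0); exact: dG.
suff : (V0 `&` \bigcap_n G n) x by rewrite V0G.
have target n : alice_target n x.
  have [E cE Ex] := cx n I.
  have [_ /(_ E cE) [_ _ /(_ x Ex) [F _]]] := bob_leg n.
  by rewrite aE => /alice_reply_sub.
by split; [exact: target 0%N | move=> n _; case: (target n.+1)].
Qed.

End AliceWins.

Section BobWins.
Variables (T : topologicalType) (B : set (set T)).
Hypotheses (Bpi : pi_base B) (Blc : locally_countable B).

Definition below (W : set T) : set (set T) := [set W' | B W' /\ W' `<=` W].

Definition pick_below (A : set T) : set T := xget set0 (below A).

Lemma pick_below_sub A : pick_below A `<=` A.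
Proof. by rewrite /pick_below; case: xgetP => [W _ []|_ x]. Qed.

Lemma B_pick_below A : open A -> A !=set0 -> B (pick_below A).
Proof.
move=> oA nA; have [W BW WA] := Bpi.2 A oA nA.
by have [] := xgetPex set0 (ex_intro (below A) W (conj BW WA)).
Qed.

Lemma countable_below_pick A : countable (below (pick_below A)).
Proof.
rewrite /pick_below; case: xgetP => [W _ [BW _]|_]; first exact: Blc.
suff -> : below set0 = set0 by exact: countable0.
by apply/seteqP; split=> // W [/Bpi.1 [_ [x Wx]] /(_ x Wx)].
Qed.

Definition bob_reply (C : set (set T)) (a : set T -> set T) : set (set T) :=
  \bigcup_(E in C) below (pick_below (a E)).

Definition bob_play : bob_strategy T := foldl bob_reply [set setT].

Lemma bob_play_mkseq a n : bob_play (mkseq a n.+1) =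
  bob_reply (prev_coll (fun k => bob_play (mkseq a k.+1)) n) (a n).
Proof. by rewrite mkseqS /bob_play foldl_rcons; case: n. Qed.

Lemma bob_reply_legal C a : countable C -> bob_legal C a (bob_reply C a).
Proof.
move=> cntC; split.
  by apply: bigcup_countable => // E _; exact: countable_below_pick.
move=> W [E CE [BW Wp]]; have [oW nW] := Bpi.1 W BW.
by split=> // x /Wp /pick_below_sub; exists E.
Qed.

Lemma bob_reply_refines C a V : alice_legal C a ->
  (exists2 E, C E & E `<=` V) -> exists2 W, bob_reply C a W & W `<=` V.
Proof.
move=> [aleg _] [E CE EV]; have [oaE naE aEE] := aleg E CE.
exists (pick_below (a E)).
  by exists E => //; split => //; exact: B_pick_below.
by move=> x /pick_below_sub /aEE /EV.
Qed.

Hypothesis Bnonmeager : forall W, B W -> nonmeager W.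

Lemma bob_play_winning : bob_winning bob_play.
Proof.
move=> a /=; set c := fun n => bob_play (mkseq a n.+1).
have cE n : c n = bob_reply (prev_coll c n) (a n) by exact: bob_play_mkseq.
have c_prev_countable n : countable (prev_coll c n).
  elim: n => [|m IH]; first exact: countable1.
  by rewrite [prev_coll c _.+1]/= cE; exact: (bob_reply_legal _ IH).1.
have c_legal n : bob_legal (prev_coll c n) (a n) (c n).
  by rewrite cE; exact: bob_reply_legal.
split=> [n _|alice_leg]; first exact: c_legal.
have [oA0 nA0 _] := (alice_leg 0%N).1 setT erefl.
set W := pick_below (a 0%N setT).
have c_dense n V : open V -> V !=set0 -> V `<=` W ->
    exists2 E, c n E & E `<=` V.
  move=> oV nV VW; elim: n => [|m IH]; rewrite cE.
    have [W' BW' W'V] := Bpi.2 V oV nV.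
    by exists W' => //; exists setT => //; split => //; apply: subset_trans VW.
  exact: bob_reply_refines.
have [x [_ cx]] : W `&` \bigcap_n \bigcup_(E in c n) E !=set0.
  apply: (Bnonmeager (B_pick_below oA0 nA0)) => n.
    by apply: bigcup_open => E /((c_legal n).2) [].
  move=> V oV nV VW; have [E cnE EV] := c_dense n V oV nV VW.
  have [_ [y Ey] _] := (c_legal n).2 E cnE.
  by exists y; split; [exact: EV | exists E].
by exists x.
Qed.

End BobWins.

Theorem corollary3p9 (T : topologicalType) :
  (exists B : set (set T), pi_base B /\ locally_countable B) ->
  BM_omega_determined T.
Proof.
move=> [B [Bpi Blc]].
have [Bnonmeager|] := pselect (forall W, B W -> nonmeager W).
  by right; exists (bob_play B); exact: bob_play_winning.
move=> /existsNP [V0 /not_implyP [BV0 /not_nonmeager [G [oG dG V0G]]]].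
have [oV0 nV0] := Bpi.1 V0 BV0.
left; exists (alice_meager_strategy V0 G).
exact: alice_meager_strategy_winning.
Qed.
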